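(* Let $\lambda>0$, $A\in\mathbb{R}^{m\times n}$, $b\in\mathbb{R}^m$, let $q=q_1-q_2:\mathbb{R}^m\to[0,+\infty)$ where $q_1:\mathbb{R}^m\to\mathbb{R}$ is continuously differentiable with Lipschitz continuous gradient and $q_2:\mathbb{R}^m\to\mathbb{R}$ is convex and continuous, and let $\mathcal{X}\subseteq\mathbb{R}^n$ be a closed hyperrectangle (possibly unbounded) with $0\in\mathcal{X}$. Set $\Phi(x):=\lambda\frac{\|x\|_1^2}{\|x\|_2^2}+q(Ax-b)$ for $x\neq 0$ and $\nu^\star:=\inf\{\Phi(x):x\in\mathcal{X}\setminus\{0\}\}$, and assume $\nu^\star<\lambda+q(-b)$. Let $\{x^k:k\in\mathbb{N}\}$ be a minimizing sequence, i.e. $x^k\in\mathcal{X}\setminus\{0\}$ for all $k$ and $\lim_{k\to\infty}\Phi(x^k)=\nu^\star$. Then every accumulation point $x^\star$ of $\{x^k\}$ is an optimal solution, i.e. $x^\star\in\mathcal{X}\setminus\{0\}$ and $\Phi(x^\star)=\nu^\star$.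
   Context: A closed hyperrectangle is a set $\{x\in\mathbb{R}^n:\underline{x}\le x\le\overline{x}\}$ (componentwise) with $\underline{x}\in(\mathbb{R}\cup\{-\infty\})^n$, $\overline{x}\in(\mathbb{R}\cup\{+\infty\})^n$. The problem considered is $\min_{x\in\mathcal{X}}\Phi(x)$; an optimal solution is a point of $\mathcal{X}\setminus\{0\}$ at which $\Phi$ attains $\nu^\star$. The inequality $\nu^\star<\lambda+q(-b)$ is a standing assumption of the paper (it excludes the trivial solution $0$). *)

From HB Require Import structures.
From mathcomp Require Import all_boot all_order all_algebra.
From mathcomp Require Import boolp classical_sets reals constructive_ereal.
Set Implicit Arguments. Unset Strict Implicit. Unset Printing Implicit Defensive.
Import Order.TTheory GRing.Theory Num.Theory.
Local Open Scope ring_scope.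
Local Open Scope classical_set_scope.

Section Defs.
Variable R : realType.

Definition l1norm (n : nat) (x : 'cV[R]_n) : R := \sum_i `|x i 0|.
Definition l2norm (n : nat) (x : 'cV[R]_n) : R := Num.sqrt (\sum_i (x i 0) ^+ 2).
Definition dotv (n : nat) (u v : 'cV[R]_n) : R := \sum_i u i 0 * v i 0.

Definition Phi (m n : nat) (lam : R) (A : 'M[R]_(m, n)) (b : 'cV[R]_m)
  (q : 'cV[R]_m -> R) (x : 'cV[R]_n) : R :=
  lam * (l1norm x ^+ 2 / l2norm x ^+ 2) + q (A *m x - b).

Definition nu_star (m n : nat) (lam : R) (A : 'M[R]_(m, n)) (b : 'cV[R]_m)
  (q : 'cV[R]_m -> R) (X : set 'cV[R]_n) : R :=
  inf [set Phi lam A b q x | x in X `&` [set x | x != 0]].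

Definition closed_hyperrectangle (n : nat) (X : set 'cV[R]_n) : Prop :=
  exists lo hi : 'I_n -> \bar R,
    (forall i, lo i != +oo%E) /\ (forall i, hi i != -oo%E) /\
    X = [set x | forall i, (lo i <= (x i 0)%:E <= hi i)%E].

(* g is the gradient of f (Frechet derivative represented via the inner product) *)
Definition is_gradient (m : nat) (f : 'cV[R]_m -> R) (g : 'cV[R]_m -> 'cV[R]_m) : Prop :=
  forall x (eps : R), 0 < eps -> exists2 delta : R, 0 < delta &
    forall y, l2norm (y - x) < delta ->
      `|f y - f x - dotv (g x) (y - x)| <= eps * l2norm (y - x).

Definition lipschitz_map (m : nat) (g : 'cV[R]_m -> 'cV[R]_m) : Prop :=
  exists L : R, forall x y, l2norm (g x - g y) <= L * l2norm (x - y).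

(* continuously differentiable with Lipschitz continuous gradient
   (Lipschitz continuity of the gradient implies its continuity) *)
Definition C11 (m : nat) (f : 'cV[R]_m -> R) : Prop :=
  exists g, is_gradient f g /\ lipschitz_map g.

Definition convex_fun (m : nat) (f : 'cV[R]_m -> R) : Prop :=
  forall x y (t : R), 0 <= t <= 1 ->
    f (t *: x + (1 - t) *: y) <= t * f x + (1 - t) * f y.

Definition continuous_fun (m : nat) (f : 'cV[R]_m -> R) : Prop :=
  forall x (eps : R), 0 < eps -> exists2 delta : R, 0 < delta &
    forall y, l2norm (y - x) < delta -> `|f y - f x| < eps.

Definition seq_cvg (u : nat -> R) (l : R) : Prop :=
  forall eps : R, 0 < eps -> exists N, forall k, (N <= k)%N -> `|u k - l| < eps.

Definition accumulation_point (n : nat) (xk : nat -> 'cV[R]_n) (xs : 'cV[R]_n) : Prop :=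
  forall eps : R, 0 < eps -> forall N, exists2 k, (N <= k)%N & l2norm (xk k - xs) < eps.

End Defs.

From HB Require Import structures.
From mathcomp Require Import all_boot all_order all_algebra.
From mathcomp Require Import boolp classical_sets reals constructive_ereal.
From mathcomp Require Import topology normedtype.
From mathcomp Require Import lra.
Import Order.TTheory GRing.Theory Num.Theory.
Import numFieldNormedType.Exports.
Set Implicit Arguments. Unset Strict Implicit. Unset Printing Implicit Defensive.
Local Open Scope ring_scope.
Local Open Scope classical_set_scope.

(* Since ||x||_1 >= ||x||_2, Phi is bounded below by the continuous function
   x |-> lam + q(Ax - b), and Phi itself is continuous away from 0.  If a
   subsequence of the minimizing sequence converged to 0, passing to the limit
   in this lower bound would give lam + q(-b) <= nu*, which is excluded; so
   the accumulation point xs is nonzero and continuity gives Phi xs = nu*.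
   Coordinatewise bounds pass to the limit, so xs lies in the hyperrectangle. *)

Section Norms.
Variable R : realType.

Lemma sum_sqr_le_sqr_sum (I : Type) (r : seq I) (a : I -> R) :
  (forall i, 0 <= a i) -> \sum_(i <- r) a i ^+ 2 <= (\sum_(i <- r) a i) ^+ 2.
Proof.
move=> a_ge0; elim: r => [|x r IHr]; first by rewrite !big_nil expr0n.
rewrite !big_cons sqrrD -addrA lerD2l; apply: (le_trans IHr); rewrite lerDr.
by apply: mulrn_wge0; apply: mulr_ge0 => //; apply: sumr_ge0.
Qed.

Lemma l2norm_sqr n (x : 'cV[R]_n) : l2norm x ^+ 2 = \sum_i x i 0 ^+ 2.
Proof. by rewrite sqr_sqrtr // sumr_ge0 // => i _; apply: sqr_ge0. Qed.

Lemma l2norm_sqr_le_l1norm_sqr n (x : 'cV[R]_n) : l2norm x ^+ 2 <= l1norm x ^+ 2.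
Proof.
rewrite l2norm_sqr /l1norm (eq_bigr (fun i => `|x i 0| ^+ 2)).
  exact: sum_sqr_le_sqr_sum.
by move=> i _; rewrite real_normK // num_real.
Qed.

Lemma l2norm_le_l1norm n (x : 'cV[R]_n) : l2norm x <= l1norm x.
Proof.
rewrite -(ler_pXn2r (n := 2)) ?nnegrE ?sqrtr_ge0 ?sumr_ge0 //.
exact: l2norm_sqr_le_l1norm_sqr.
Qed.

Lemma normr_coord_le_l2norm n (x : 'cV[R]_n) i : `|x i 0| <= l2norm x.
Proof.
rewrite -sqrtr_sqr; apply: ler_wsqrtr.
by rewrite (bigD1 i) //= lerDl sumr_ge0 // => j _; apply: sqr_ge0.
Qed.

Lemma l2norm_sqr_gt0 n (x : 'cV[R]_n) : x != 0 -> 0 < l2norm x ^+ 2.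
Proof.
move=> x_neq0; rewrite l2norm_sqr lt0r sumr_ge0 ?andbT => [|i _]; last exact: sqr_ge0.
apply: contra x_neq0 => /eqP /(psumr_eq0P (fun i _ => sqr_ge0 (x i 0))) x0.
by apply/eqP/matrixP => i j; rewrite ord1 mxE; apply/eqP; rewrite -sqrf_eq0 x0.
Qed.

Lemma l1norm_l2norm_ratio_ge1 n (x : 'cV[R]_n) :
  x != 0 -> 1 <= l1norm x ^+ 2 / l2norm x ^+ 2.
Proof.
move=> x_neq0; rewrite ler_pdivlMr ?l2norm_sqr_gt0 // mul1r.
exact: l2norm_sqr_le_l1norm_sqr.
Qed.

Lemma normr_dotv_le n (u v : 'cV[R]_n) : `|dotv u v| <= l1norm u * l2norm v.
Proof.
rewrite /dotv /l1norm mulr_suml; apply: le_trans (ler_norm_sum _ _ _) _.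
apply: ler_sum => i _; rewrite normrM; apply: ler_wpM2l => //.
exact: normr_coord_le_l2norm.
Qed.

Lemma l2norm_mulmx_le m n (A : 'M[R]_(m, n)) (v : 'cV[R]_n) :
  l2norm (A *m v) <= (\sum_i \sum_j `|A i j|) * l2norm v.
Proof.
apply: (le_trans (l2norm_le_l1norm _)); rewrite /l1norm mulr_suml.
apply: ler_sum => i _; rewrite mxE mulr_suml; apply: le_trans (ler_norm_sum _ _ _) _.
apply: ler_sum => j _; rewrite normrM; apply: ler_wpM2l => //.
exact: normr_coord_le_l2norm.
Qed.

End Norms.

Section L2Continuity.
Variable R : realType.

(* The topology of ['cV[R]_n] is the sup-norm one; the radius [d / n.+1]
   absorbs the factor [n] in [l2norm <= l1norm <= n * sup-norm]. *)
Lemma nbhs_l2normP n (x : 'cV[R]_n) (P : set 'cV[R]_n) :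
  nbhs x P <-> exists2 d : R, 0 < d & forall y, l2norm (y - x) < d -> P y.
Proof.
split.
- move=> /nbhs_ballP [e /= e_gt0 ballP]; exists e => // y xy; apply: ballP.
  split => // i j; rewrite (ord1 j) /ball /= -normrN opprB.
  by apply: le_lt_trans xy; have := normr_coord_le_l2norm (y - x) i; rewrite !mxE.
- move=> [d d_gt0 dP]; apply/nbhs_ballP.
  pose e := d / n.+1%:R; have e_gt0 : 0 < e by rewrite divr_gt0.
  exists e => //= y [_ xy]; apply: dP; apply: le_lt_trans (l2norm_le_l1norm _) _.
  apply: le_lt_trans (_ : _ <= \sum_(i < n) e) _.
    by apply: ler_sum => i _; rewrite !mxE distrC ltW //; apply: xy.
  have -> : d = e *+ n.+1 by rewrite -mulr_natr divfK ?pnatr_eq0.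
  by rewrite sumr_const card_ord mulrS ltrDr.
Qed.

Lemma continuous_atP n (f : 'cV[R]_n -> R) x :
  {for x, continuous f} <->
  forall eps : R, 0 < eps -> exists2 d : R, 0 < d &
    forall y, l2norm (y - x) < d -> `|f y - f x| < eps.
Proof.
have nbhs_x_filter : Filter (nbhs x) := nbhs_filter x.
split => [/cvgrPdist_lt fx e e_gt0 | fx]; last apply/cvgrPdist_lt => e e_gt0.
  by have /nbhs_l2normP [d d_gt0 dP] := fx e e_gt0; exists d => // y /dP; rewrite distrC.
apply/nbhs_l2normP; have [d d_gt0 dP] := fx e e_gt0.
by exists d => // y /dP; rewrite distrC.
Qed.

Lemma continuous_funP n (f : 'cV[R]_n -> R) : continuous_fun f <-> continuous f.
Proof. by split => fc x; apply/continuous_atP; apply: fc. Qed.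

Lemma coord_continuous n (i : 'I_n) : continuous (fun x : 'cV[R]_n => x i 0).
Proof.
move=> x; apply/continuous_atP => e e_gt0; exists e => // y; apply: le_lt_trans.
by have := normr_coord_le_l2norm (y - x) i; rewrite !mxE.
Qed.

Lemma l1norm_continuous n : continuous (@l1norm R n).
Proof.
apply: (continuous_big add_continuous) => i _ x.
by apply: cvg_norm; [exact: nbhs_filter | exact: coord_continuous].
Qed.

Lemma l2norm_sqr_continuous n : continuous (fun x : 'cV[R]_n => l2norm x ^+ 2).
Proof.
rewrite (funext (@l2norm_sqr R n)).
apply: (continuous_big add_continuous) => i _ x.
by apply: continuousM; apply: coord_continuous.
Qed.

Lemma gradient_continuous_fun m (f : 'cV[R]_m -> R) g :
  is_gradient f g -> continuous_fun f.
Proof.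
move=> f_grad x e e_gt0; have [d1 d1_gt0 fd1] := f_grad x 1 ltr01.
have C_gt0 : 0 < 1 + l1norm (g x) by rewrite ltr_pwDl // sumr_ge0.
exists (Num.min d1 (e / (1 + l1norm (g x)))); first by rewrite lt_min d1_gt0 divr_gt0.
move=> y; rewrite lt_min => /andP [yd1 yde].
apply: (le_lt_trans (_ : _ <= (1 + l1norm (g x)) * l2norm (y - x))).
  rewrite -(subrK (dotv (g x) (y - x)) (f y - f x)) mulrDl mul1r.
  apply: (le_trans (ler_normD _ _)); apply: lerD.
    by rewrite -[l2norm _]mul1r; apply: fd1.
  exact: normr_dotv_le.
by rewrite mulrC -ltr_pdivlMr.
Qed.

Lemma continuous_fun_affine_comp m n (q : 'cV[R]_m -> R) (A : 'M[R]_(m, n)) b :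
  continuous_fun q -> continuous_fun (fun x => q (A *m x - b)).
Proof.
move=> q_cont x e e_gt0; have [d d_gt0 qd] := q_cont (A *m x - b) e e_gt0.
set C := \sum_i \sum_j `|A i j|.
have C_ge0 : 0 <= C by apply: sumr_ge0 => i _; apply: sumr_ge0.
exists (d / (C + 1)); first by rewrite divr_gt0 // ltr_wpDl.
move=> y yx; apply: qd.
rewrite opprB addrA subrK -mulmxBr; apply: (le_lt_trans (l2norm_mulmx_le _ _)).
apply: (le_lt_trans (_ : _ <= C * (d / (C + 1)))); first by rewrite ler_wpM2l // ltW.
by rewrite mulrA ltr_pdivrMr ?ltr_wpDl // mulrDr mulr1 mulrC ltrDl.
Qed.

End L2Continuity.

Section Objective.
Variables (R : realType) (m n : nat) (lam : R) (A : 'M[R]_(m, n)) (b : 'cV[R]_m).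
Variable q : 'cV[R]_m -> R.

Definition Phi_minorant (x : 'cV[R]_n) : R := lam + q (A *m x - b).

Lemma Phi_minorant0 : Phi_minorant 0 = lam + q (- b).
Proof. by rewrite /Phi_minorant mulmx0 sub0r. Qed.

Lemma Phi_minorant_le (x : 'cV[R]_n) : 0 <= lam -> x != 0 ->
  Phi_minorant x <= Phi lam A b q x.
Proof.
by move=> lam_ge0 x_neq0; rewrite lerD2r ler_peMr // l1norm_l2norm_ratio_ge1.
Qed.

Lemma Phi_minorant_continuous_at (x : 'cV[R]_n) :
  continuous_fun q -> {for x, continuous Phi_minorant}.
Proof.
move=> /(continuous_fun_affine_comp A b) /continuous_funP q_cont.
have nbhs_x_filter : Filter (nbhs x) := nbhs_filter x.
exact: cvgD (cvg_cst _) (q_cont x).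
Qed.

Lemma Phi_continuous_at (x : 'cV[R]_n) : continuous_fun q -> x != 0 ->
  {for x, continuous (Phi lam A b q)}.
Proof.
move=> /(continuous_fun_affine_comp A b) /continuous_funP q_cont x_neq0.
have nbhs_x_filter : Filter (nbhs x) := nbhs_filter x.
apply: cvgD (q_cont x); apply: cvgM; first exact: cvg_cst.
apply: cvgM; first by apply: cvgM; apply: l1norm_continuous.
by apply: cvgV; [rewrite gt_eqF ?l2norm_sqr_gt0 | apply: l2norm_sqr_continuous].
Qed.

End Objective.

Lemma seq_cvg_cst (R : realType) (c : R) : seq_cvg (fun=> c) c.
Proof. by move=> e e_gt0; exists 0%N => k _; rewrite subrr normr0. Qed.

Lemma seq_cvgN (R : realType) (u : nat -> R) l :
  seq_cvg u l -> seq_cvg (fun k => - u k) (- l).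
Proof.
move=> u_cvg e /u_cvg [N uN]; exists N => k /uN.
by rewrite -opprD normrN.
Qed.

Section AccumulationPoint.
Variables (R : realType) (n : nat) (xk : nat -> 'cV[R]_n) (xs : 'cV[R]_n).
Hypothesis xs_acc : accumulation_point xk xs.

Lemma accumulation_point_le (h : 'cV[R]_n -> R) (u : nat -> R) l :
  {for xs, continuous h} -> seq_cvg u l -> (forall k, h (xk k) <= u k) ->
  h xs <= l.
Proof.
move=> /continuous_atP h_cont u_cvg h_le; rewrite leNgt; apply/negP => l_lt.
have e_gt0 : 0 < (h xs - l) / 2 by rewrite divr_gt0 // subr_gt0.
have [d d_gt0 hd] := h_cont _ e_gt0.
have [N uN] := u_cvg _ e_gt0.
have [k /uN] := xs_acc d_gt0 N.
move=> /ltr_distlDr u_lt /hd /ltr_distlCBl h_gt.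
have := h_le k; lra.
Qed.

Lemma accumulation_point_cvg (h : 'cV[R]_n -> R) l :
  {for xs, continuous h} -> seq_cvg (fun k => h (xk k)) l -> h xs = l.
Proof.
move=> h_cont h_cvg; apply/eqP; rewrite eq_le.
rewrite (accumulation_point_le h_cont h_cvg) //= -lerN2.
exact: accumulation_point_le (continuousN h_cont) (seq_cvgN h_cvg) _.
Qed.

Lemma closed_hyperrectangle_accumulation (X : set 'cV[R]_n) :
  closed_hyperrectangle X -> (forall k, X (xk k)) -> X xs.
Proof.
move=> [lo [hi [lo_fin [hi_fin ->]]]] /= xk_X i.
have lo_le k := (andP (xk_X k i)).1; have le_hi k := (andP (xk_X k i)).2.
apply/andP; split.
- move: (lo_fin i) lo_le; case: (lo i) => [r _ r_le | // | _ _]; last exact: leNye.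
  rewrite lee_fin -lerN2; apply: (accumulation_point_le (h := fun x => - x i 0)).
  + exact/continuousN/coord_continuous.
  + exact: seq_cvg_cst.
  + by move=> k; rewrite lerN2 -lee_fin.
- move: (hi_fin i) le_hi; case: (hi i) => [r _ le_r | _ _ | //]; last exact: leey.
  rewrite lee_fin; apply: (accumulation_point_le (h := fun x => x i 0)).
  + exact: coord_continuous.
  + exact: seq_cvg_cst.
  + by move=> k; rewrite -lee_fin.
Qed.

End AccumulationPoint.

Theorem lemma3p1 (R : realType) (m n : nat) (lam : R) (A : 'M[R]_(m, n))
  (b : 'cV[R]_m) (q1 q2 : 'cV[R]_m -> R) (X : set 'cV[R]_n)
  (xk : nat -> 'cV[R]_n) (xs : 'cV[R]_n) :
  0 < lam ->
  C11 q1 ->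
  convex_fun q2 -> continuous_fun q2 ->
  (forall z, 0 <= q1 z - q2 z) ->
  closed_hyperrectangle X -> X 0 ->
  nu_star lam A b (fun z => q1 z - q2 z) X < lam + (q1 (- b) - q2 (- b)) ->
  (forall k, X (xk k) /\ xk k != 0) ->
  seq_cvg (fun k => Phi lam A b (fun z => q1 z - q2 z) (xk k))
          (nu_star lam A b (fun z => q1 z - q2 z) X) ->
  accumulation_point xk xs ->
  [/\ X xs, xs != 0 &
      Phi lam A b (fun z => q1 z - q2 z) xs = nu_star lam A b (fun z => q1 z - q2 z) X].
Proof.
move=> lam_gt0 [g [q1_grad _]] _ q2_cont _ X_rect _ nu_lt xk_X Phi_cvg xs_acc.
have q_cont : continuous_fun (fun z => q1 z - q2 z).
  move/continuous_funP: (gradient_continuous_fun q1_grad) => q1_cont.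
  move/continuous_funP: q2_cont => q2_cont.
  by apply/continuous_funP => z; exact: continuousB (q1_cont z) (q2_cont z).
have xs_neq0 : xs != 0.
  apply: contraTneq nu_lt => xs0; rewrite -leNgt.
  have := accumulation_point_le xs_acc (Phi_minorant_continuous_at q_cont)
    Phi_cvg (fun k => Phi_minorant_le A b _ (ltW lam_gt0) (xk_X k).2).
  by rewrite xs0 Phi_minorant0.
split => //.
- by apply: (closed_hyperrectangle_accumulation xs_acc X_rect) => k; case: (xk_X k).
- exact: (accumulation_point_cvg xs_acc (Phi_continuous_at q_cont xs_neq0) Phi_cvg).
Qed.
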